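(* For each $i\in\{1,\dots,n\}$ let $D_i\in\mathbb{R}^{d\times m}$, let $\Gamma_i\in\mathbb{R}^{m\times m}$ be diagonal with entries in $\{0,1\}$, let $\mathcal{B}_i(\cdot)$ be the feature-lifting of a linear basis warp, $Z_i$ its regularization matrix and $\mu_i\ge0$, such that $M_i=\mathcal{B}_i(D_i)\Gamma_i\Gamma_i\mathcal{B}_i(D_i)^{\top}+\mu_iZ_i^{\top}Z_i$ is invertible. Let $\mathcal{P}_{III}=\sum_{i=1}^n\big(\Gamma_i-\Gamma_i\mathcal{B}_i(D_i)^{\top}M_i^{-1}\mathcal{B}_i(D_i)\Gamma_i\big)$. Let $D_i'=R_iD_i+t_i\mathbf{1}^{\top}$ for rotations $R_i$ and translations $t_i$, and let $Z_i'$ be the regularization matrix used for the transformed shapes. If for each $i$ there exists an invertible matrix $H_i$ with $\mathcal{B}_i(D_i')=H_i\mathcal{B}_i(D_i)$ and $Z_i'=Z_iH_i^{\top}$, then $\mathcal{P}_{III}$ computed from $(D_i',Z_i')$ equals $\mathcal{P}_{III}$ computed from $(D_i,Z_i)$, and hence the optimal reference shape $S$ of problem (III) (for fixed $\Lambda$ and $\nu$) is the same.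
   Context: Problem (III): given a diagonal $\Lambda\in\mathbb{R}^{d\times d}$ and $\nu\ge0$, $$\min_{W_i\in\mathbb{R}^{l_i\times d},\,S\in\mathbb{R}^{d\times m}}\ \sum_{i=1}^n\|W_i^{\top}\mathcal{B}_i(D_i)\Gamma_i-S\Gamma_i\|_F^2+\sum_{i=1}^n\mu_i\|Z_iW_i\|_F^2+\nu\|S\mathbf{1}\|_2^2\quad\text{s.t.}\quad SS^{\top}=\Lambda.$$ A linear basis warp with feature map $\beta:\mathbb{R}^d\to\mathbb{R}^l$ maps $p\mapsto W^{\top}\beta(p)$; $\mathcal{B}(D)=[\beta(p_1),\dots,\beta(p_m)]$ for $D=[p_1,\dots,p_m]$. $\mathbf{1}\in\mathbb{R}^m$ is the all-ones vector. *)

From HB Require Import structures.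
From mathcomp Require Import all_boot all_order all_algebra.
From mathcomp Require Import reals.
Set Implicit Arguments. Unset Strict Implicit. Unset Printing Implicit Defensive.
Import Order.TTheory GRing.Theory Num.Theory.
Local Open Scope ring_scope.

Section Defs.
Variable R : realType.

Definition featmx d l m (beta : 'cV[R]_d -> 'cV[R]_l) (D : 'M[R]_(d, m))
  : 'M[R]_(l, m) := \matrix_(a, j) beta (col j D) a 0.

Definition frob2 p q (A : 'M[R]_(p, q)) : R := \sum_a \sum_b (A a b) ^+ 2.

Definition Mmat l m k (B : 'M[R]_(l, m)) (G : 'M[R]_m) (mu : R)
  (Z : 'M[R]_(k, l)) : 'M[R]_l :=
  B *m G *m G *m B^T + mu *: (Z^T *m Z).

Definition P3 n m (l k : 'I_n -> nat) (B : forall i, 'M[R]_(l i, m))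
  (G : 'I_n -> 'M[R]_m) (mu : 'I_n -> R) (Z : forall i, 'M[R]_(k i, l i))
  : 'M[R]_m :=
  \sum_(i < n) (G i - G i *m (B i)^T *m invmx (Mmat (B i) (G i) (mu i) (Z i))
                        *m B i *m G i).

Definition obj3 n d m (l k : 'I_n -> nat) (B : forall i, 'M[R]_(l i, m))
  (G : 'I_n -> 'M[R]_m) (mu : 'I_n -> R) (Z : forall i, 'M[R]_(k i, l i))
  (nu : R) (W : forall i, 'M[R]_(l i, d)) (S : 'M[R]_(d, m)) : R :=
  \sum_(i < n) frob2 ((W i)^T *m B i *m G i - S *m G i)
  + \sum_(i < n) mu i * frob2 (Z i *m W i)
  + nu * frob2 (S *m (const_mx 1 : 'cV[R]_m)).

Definition optimal_S3 n d m (l k : 'I_n -> nat) (B : forall i, 'M[R]_(l i, m))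
  (G : 'I_n -> 'M[R]_m) (mu : 'I_n -> R) (Z : forall i, 'M[R]_(k i, l i))
  (nu : R) (Lam : 'M[R]_d) (S : 'M[R]_(d, m)) : Prop :=
  S *m S^T = Lam /\
  exists W : forall i, 'M[R]_(l i, d),
    forall (W' : forall i, 'M[R]_(l i, d)) (S' : 'M[R]_(d, m)),
      S' *m S'^T = Lam ->
      obj3 B G mu Z nu W S <= obj3 B G mu Z nu W' S'.

End Defs.

(* A basis change H of the feature space turns B into H B and Z into Z H^T,
   hence M into H M H^T, so the matrix B^T M^-1 B, and with it P_III, is
   unchanged.
   In the objective of problem (III), the weights W of the transformed problem
   correspond bijectively to the weights H^T W of the original one with the same
   value, so both problems have the same optimal reference shapes. *)

From HB Require Import structures.
From mathcomp Require Import all_boot all_order all_algebra.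
From mathcomp Require Import reals.
Import Order.TTheory GRing.Theory Num.Theory.
Local Open Scope ring_scope.

Lemma invmxM (R : comUnitRingType) n (A B : 'M[R]_n) :
  A \in unitmx -> B \in unitmx -> invmx (A *m B) = invmx B *m invmx A.
Proof.
move=> uA uB; have uAB : A *m B \in unitmx by rewrite unitmx_mul uA uB.
have AB_inv : A *m B *m (invmx B *m invmx A) = 1%:M.
  by rewrite -mulmxA (mulKVmx uB) (mulmxV uA).
by rewrite -[LHS]mulmx1 -AB_inv mulmxA (mulVmx uAB) mul1mx.
Qed.

Lemma quad_invmx_congr (R : comUnitRingType) l m (B : 'M[R]_(l, m))
    (N H : 'M[R]_l) :
  H \in unitmx -> N \in unitmx ->
  (H *m B)^T *m invmx (H *m N *m H^T) *m (H *m B) = B^T *m invmx N *m B.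
Proof.
move=> uH uN; have uHT : H^T \in unitmx by rewrite unitmx_tr.
rewrite !invmxM ?unitmx_mul ?uH ?uN // trmx_mul -!mulmxA.
by rewrite (mulKVmx uHT) (mulKmx uH).
Qed.

Section ChangeOfBasis.
Variables (R : realType) (n d m : nat) (l k : 'I_n -> nat).
Variables (B B' : forall i, 'M[R]_(l i, m)) (Z Z' : forall i, 'M[R]_(k i, l i)).
Variables (G : 'I_n -> 'M[R]_m) (mu : 'I_n -> R).
Variable H : forall i, 'M[R]_(l i).
Hypothesis unitH : forall i, H i \in unitmx.
Hypothesis B'E : forall i, B' i = H i *m B i.
Hypothesis Z'E : forall i, Z' i = Z i *m (H i)^T.

Lemma Mmat_change_basis i :
  Mmat (B' i) (G i) (mu i) (Z' i)
  = H i *m Mmat (B i) (G i) (mu i) (Z i) *m (H i)^T.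
Proof.
rewrite /Mmat B'E Z'E mulmxDr mulmxDl !trmx_mul trmxK -!mulmxA.
by rewrite -scalemxAl -scalemxAr !mulmxA.
Qed.

Lemma P3_change_basis :
  (forall i, Mmat (B i) (G i) (mu i) (Z i) \in unitmx) ->
  P3 B' G mu Z' = P3 B G mu Z.
Proof.
move=> unitM; apply: eq_bigr => i _.
rewrite Mmat_change_basis B'E; congr (_ - _).
rewrite -!mulmxA; congr (_ *m _); rewrite !mulmxA; congr (_ *m _).
by rewrite -[_ *m H i *m B i]mulmxA quad_invmx_congr.
Qed.

Lemma obj3_change_basis nu (W W' : forall i, 'M[R]_(l i, d))
    (S : 'M[R]_(d, m)) :
  (forall i, W i = (H i)^T *m W' i) ->
  obj3 B' G mu Z' nu W' S = obj3 B G mu Z nu W S.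
Proof.
move=> WE; rewrite /obj3; congr (_ + _ + _); apply: eq_bigr => i _.
  by rewrite WE B'E trmx_mul trmxK mulmxA.
by rewrite WE Z'E mulmxA.
Qed.

Lemma optimal_S3_change_basis nu (Lam : 'M[R]_d) (S : 'M[R]_(d, m)) :
  optimal_S3 B' G mu Z' nu Lam S <-> optimal_S3 B G mu Z nu Lam S.
Proof.
have unitHT i : (H i)^T \in unitmx by rewrite unitmx_tr.
pose back (W : forall i, 'M[R]_(l i, d)) i := invmx (H i)^T *m W i.
have backK W i : W i = (H i)^T *m back W i by rewrite /back mulKVmx.
split=> -[SSE [W Wopt]]; split=> //.
  exists (fun i => (H i)^T *m W i) => W1 S1 S1E.
  rewrite -(obj3_change_basis _ _ _ _ (fun=> erefl)).
  by rewrite -(obj3_change_basis _ _ _ _ (backK W1)); apply: Wopt.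
exists (back W) => W1 S1 S1E.
rewrite (obj3_change_basis _ _ _ _ (backK W)).
by rewrite (obj3_change_basis _ _ _ _ (fun=> erefl)); apply: Wopt.
Qed.

End ChangeOfBasis.

Theorem lemma6 (R : realType) (n d m : nat) (l k : 'I_n -> nat)
  (beta : forall i, 'cV[R]_d -> 'cV[R]_(l i))
  (D : 'I_n -> 'M[R]_(d, m))
  (g : 'I_n -> 'rV[R]_m)
  (hg : forall i j, g i 0 j = 0 \/ g i 0 j = 1)
  (Z Z' : forall i, 'M[R]_(k i, l i))
  (mu : 'I_n -> R) (hmu : forall i, 0 <= mu i)
  (hM : forall i, Mmat (featmx (beta i) (D i)) (diag_mx (g i)) (mu i) (Z i)
                    \in unitmx)
  (Rot : 'I_n -> 'M[R]_d)
  (hRot : forall i, (Rot i)^T *m Rot i = 1%:M /\ \det (Rot i) = 1)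
  (t : 'I_n -> 'cV[R]_d)
  (hH : forall i, exists H : 'M[R]_(l i),
     H \in unitmx /\
     featmx (beta i) (Rot i *m D i + t i *m (const_mx 1 : 'rV[R]_m))
       = H *m featmx (beta i) (D i) /\
     Z' i = Z i *m H^T)
  (Lam : 'M[R]_d) (hLam : is_diag_mx Lam) (nu : R) (hnu : 0 <= nu) :
  let D' := fun i => Rot i *m D i + t i *m (const_mx 1 : 'rV[R]_m) in
  let B := fun i => featmx (beta i) (D i) in
  let B' := fun i => featmx (beta i) (D' i) in
  let G := fun i => diag_mx (g i) in
  P3 B' G mu Z' = P3 B G mu Z /\
  (forall S : 'M[R]_(d, m),
     optimal_S3 B' G mu Z' nu Lam S <-> optimal_S3 B G mu Z nu Lam S).
Proof.
move=> D' B B' G.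
have [H HP] := fin_all_exists hH.
have unitH i : H i \in unitmx by case: (HP i).
have B'E i : B' i = H i *m B i by case: (HP i) => _ [].
have Z'E i : Z' i = Z i *m (H i)^T by case: (HP i) => _ [].
split; first exact: P3_change_basis.
by move=> S; apply: optimal_S3_change_basis.
Qed.
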